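(* Let $\Gamma\subseteq\mathbb R^n$ be an open convex set, $S\subseteq\Gamma$ a nonempty convex set, and $f:\Gamma\to\mathbb R$ a Fréchet differentiable function that is quasiconvex on $\Gamma$. Let $\bar S=\arg\min\{f(x)\mid x\in S\}$, and let $x,y\in\bar S$ with $\nabla f(x)\neq 0$ and $\nabla f(y)\neq 0$. Then for every $d\in\mathbb R^n$, \[ \nabla f(x)^T d<0\quad\Longrightarrow\quad \nabla f(y)^T d\le 0 . \]
   Context: A function $f:\Gamma\to\mathbb R$ on a convex set $\Gamma\subseteq\mathbb R^n$ is quasiconvex on $\Gamma$ iff $f(x+t(y-x))\le\max\{f(x),f(y)\}$ for all $x,y\in\Gamma$ and $t\in[0,1]$. $\bar S$ denotes the solution set of the problem of minimizing $f$ over $S$. *)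

From mathcomp Require Import all_boot.
From Stdlib Require Import Reals.
Set Implicit Arguments.
Unset Strict Implicit.
Unset Printing Implicit Defensive.
Local Open Scope R_scope.

Definition vec (n : nat) := 'I_n -> R.

Definition vadd {n} (x y : vec n) : vec n := fun i => (x i + y i).
Definition vsub {n} (x y : vec n) : vec n := fun i => (x i - y i).
Definition vscale {n} (t : R) (x : vec n) : vec n := fun i => (t * x i).
Definition vzero {n} : vec n := fun _ => 0.

Definition dot {n} (x y : vec n) : R := \big[Rplus/0]_(i < n) (x i * y i).
Definition vnorm {n} (x : vec n) : R := sqrt (dot x x).

Definition open_in_Rn {n} (G : vec n -> Prop) : Prop :=
  forall x, G x -> exists r, (0 < r) /\
    forall y, (vnorm (vsub y x) < r) -> G y.

Definition convex_in_Rn {n} (G : vec n -> Prop) : Prop :=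
  forall x y t, G x -> G y -> (0 <= t <= 1) ->
    G (vadd x (vscale t (vsub y x))).

Definition quasiconvex_on {n} (G : vec n -> Prop) (f : vec n -> R) : Prop :=
  forall x y t, G x -> G y -> (0 <= t <= 1) ->
    (f (vadd x (vscale t (vsub y x))) <= Rmax (f x) (f y)).

Definition frechet_grad {n} (f : vec n -> R) (x g : vec n) : Prop :=
  forall eps, (0 < eps) -> exists delta, (0 < delta) /\
    forall h, (0 < vnorm h < delta) ->
      (Rabs (f (vadd x h) - f x - dot g h) <= eps * vnorm h).

Definition argmin_on {n} (f : vec n -> R) (S : vec n -> Prop) (x : vec n) : Prop :=
  S x /\ forall z, S z -> (f x <= f z).

(* Since [x] and [y] are both minimizers, [f x = f y] and moving from [y]
   towards [x] stays in [S], so [grad y . (x - y) >= 0].  If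
   [grad x . d < 0], a short step [z = x + s d] stays in the open set [Gam]
   and has [f z < f x = f y]; quasiconvexity then keeps [f] below [f y] on the
   segment from [y] to [z], so [grad y . (z - y) <= 0].  As
   [z - y = (x - y) + s d] with [s > 0], this forces [grad y . d <= 0]. *)
From HB Require Import structures.
From mathcomp Require Import all_boot.
From Stdlib Require Import Reals Lra FunctionalExtensionality.
Open Scope R_scope.

Lemma RplusA : associative Rplus.
Proof. by move=> a b c; rewrite Rplus_assoc. Qed.

HB.instance Definition _ :=
  Monoid.isComLaw.Build R 0 Rplus RplusA Rplus_comm Rplus_0_l.

Lemma sumR_ge0 {n} (F : 'I_n -> R) :
  (forall i, 0 <= F i) -> 0 <= \big[Rplus/0]_(i < n) F i.
Proof. by move=> F_ge0; apply: big_ind => // *; [lra | apply: Rplus_le_le_0_compat]. Qed.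

Lemma sumR_eq0 {n} (F : 'I_n -> R) :
  (forall i, 0 <= F i) -> \big[Rplus/0]_(i < n) F i = 0 -> forall i, F i = 0.
Proof.
move=> F_ge0 sum0 i; move: sum0; rewrite (bigD1 i) //=.
set rest := (X in _ + X = 0).
have : 0 <= rest by apply: big_ind => // *; [lra | apply: Rplus_le_le_0_compat].
by have := F_ge0 i; lra.
Qed.

Lemma sumR_scale {n} (F : 'I_n -> R) c :
  \big[Rplus/0]_(i < n) (c * F i) = c * \big[Rplus/0]_(i < n) F i.
Proof. by apply: (big_ind2 (fun a b => a = c * b)) => [|a1 b1 a2 b2 -> ->|//]; ring. Qed.

Lemma Rlt_div_mul {a b c : R} : 0 < c -> a < b / c -> a * c < b.
Proof.
move=> c_gt0 /(Rmult_lt_compat_r c _ _ c_gt0).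
by rewrite /Rdiv Rmult_assoc Rinv_l ?Rmult_1_r //; lra.
Qed.

Lemma half_Rmin_bounds {a b : R} :
  0 < a -> 0 < b -> 0 < Rmin a b / 2 /\ Rmin a b / 2 < a /\ Rmin a b / 2 < b.
Proof.
move=> a_gt0 b_gt0; have := Rmin_l a b; have := Rmin_r a b.
by have := Rmin_pos a b a_gt0 b_gt0; lra.
Qed.

Section DotProduct.

Context {n : nat}.
Implicit Types g u v k : vec n.

Lemma dot_addr g u v : dot g (vadd u v) = dot g u + dot g v.
Proof. by rewrite /dot -big_split /=; apply: eq_bigr => i _; rewrite /vadd; ring. Qed.

Lemma dot_scaler g k s : dot g (vscale s k) = s * dot g k.
Proof. by rewrite /dot -sumR_scale; apply: eq_bigr => i _; rewrite /vscale; ring. Qed.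

Lemma dot_scalel g k s : dot (vscale s g) k = s * dot g k.
Proof. by rewrite /dot -sumR_scale; apply: eq_bigr => i _; rewrite /vscale; ring. Qed.

Lemma dot_self_ge0 k : 0 <= dot k k.
Proof. by apply: sumR_ge0 => i; apply: Rle_0_sqr. Qed.

Lemma vnorm_ge0 k : 0 <= vnorm k.
Proof. exact: sqrt_pos. Qed.

Lemma dot_vnorm0 g k : vnorm k = 0 -> dot g k = 0.
Proof.
move=> /(sqrt_eq_0 _ (dot_self_ge0 k)) /sumR_eq0 k0.
have {}k0 i : k i = 0 by have := k0 (fun j => Rle_0_sqr (k j)) i; nra.
rewrite /dot (eq_bigr (fun i => 0 * g i)); last by move=> i _; rewrite k0; ring.
by rewrite sumR_scale; ring.
Qed.

Lemma vnorm_scale s k : 0 <= s -> vnorm (vscale s k) = s * vnorm k.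
Proof.
move=> s_ge0; rewrite /vnorm dot_scaler dot_scalel -Rmult_assoc.
by rewrite sqrt_mult_alt ?sqrt_square //; nra.
Qed.

Lemma vsub_vadd_scale x k s : vsub (vadd x (vscale s k)) x = vscale s k.
Proof. by apply: functional_extensionality => i; rewrite /vsub /vadd; ring. Qed.

End DotProduct.

Lemma open_in_Rn_ray {n} {G : vec n -> Prop} {x} k :
  open_in_Rn G -> G x ->
  exists delta, 0 < delta /\ forall s, 0 <= s < delta -> G (vadd x (vscale s k)).
Proof.
move=> G_open Gx; have [r [r_gt0 ball_r]] := G_open x Gx.
have k_ge0 := vnorm_ge0 k.
exists (r / (vnorm k + 1)); split; first by apply: Rdiv_lt_0_compat; lra.
move=> s [s_ge0 s_lt]; apply: ball_r; rewrite vsub_vadd_scale vnorm_scale //.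
have := Rlt_div_mul (Rplus_le_lt_0_compat _ _ k_ge0 Rlt_0_1) s_lt.
nra.
Qed.

Section FrechetGradient.

Context {n : nat} {f : vec n -> R} {y g : vec n}.
Hypothesis f_grad : frechet_grad f y g.

Lemma frechet_grad_descent k : dot g k < 0 ->
  exists delta, 0 < delta /\
    forall s, 0 < s < delta -> f (vadd y (vscale s k)) < f y.
Proof.
move=> gk_lt0.
have k_gt0 : 0 < vnorm k.
  have [k0|] := Req_dec (vnorm k) 0; last by have := vnorm_ge0 k; lra.
  by rewrite dot_vnorm0 in gk_lt0; lra.
(* With this tolerance the first-order term [s * dot g k] outweighs the error. *)
have eps_gt0 : 0 < - dot g k / (2 * vnorm k) by apply: Rdiv_lt_0_compat; lra.
have [delta [delta_gt0 approx]] := f_grad _ eps_gt0.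
exists (delta / vnorm k); split; first exact: Rdiv_lt_0_compat.
move=> s [s_gt0 s_lt].
have step_small : 0 < vnorm (vscale s k) < delta.
  by rewrite vnorm_scale; [split; [nra | exact: Rlt_div_mul k_gt0 s_lt] | lra].
have := approx _ step_small; rewrite vnorm_scale ?dot_scaler; last lra.
have -> : - dot g k / (2 * vnorm k) * (s * vnorm k) = - (s * dot g k) / 2.
  by field; lra.
have := Rle_abs (f (vadd y (vscale s k)) - f y - s * dot g k); nra.
Qed.

Lemma frechet_grad_opp : frechet_grad (fun z => - f z) y (vscale (-1) g).
Proof.
move=> eps /(f_grad eps) [delta [delta_gt0 approx]].
exists delta; split => // h /approx.
by rewrite dot_scalel -Rabs_Ropp; congr (Rabs _ <= _); ring.
Qed.

Lemma frechet_grad_dir_ge0 k :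
  (forall s, 0 < s <= 1 -> f y <= f (vadd y (vscale s k))) -> 0 <= dot g k.
Proof.
move=> ray_ge; apply: Rnot_lt_le => /frechet_grad_descent [delta [delta_gt0 below]].
have [s_gt0 [s_lt s_lt1]] := half_Rmin_bounds delta_gt0 Rlt_0_1.
have := below _ (conj s_gt0 s_lt).
by have := ray_ge _ (conj s_gt0 (Rlt_le _ _ s_lt1)); lra.
Qed.

End FrechetGradient.

Lemma frechet_grad_dir_le0 {n} {f : vec n -> R} {y g k} : frechet_grad f y g ->
  (forall s, 0 < s <= 1 -> f (vadd y (vscale s k)) <= f y) -> dot g k <= 0.
Proof.
move=> /frechet_grad_opp /frechet_grad_dir_ge0 opp_ge0 ray_le.
have := opp_ge0 k (fun s s_in => Ropp_le_contravar _ _ (ray_le s s_in)).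
by rewrite dot_scalel; lra.
Qed.

Lemma descent_step_in_open {n} {G : vec n -> Prop} {f : vec n -> R} {x g d} :
  open_in_Rn G -> G x -> frechet_grad f x g -> dot g d < 0 ->
  exists s, 0 < s /\ G (vadd x (vscale s d)) /\ f (vadd x (vscale s d)) < f x.
Proof.
move=> G_open Gx f_grad /(frechet_grad_descent f_grad) [delta1 [delta1_gt0 below]].
have [delta2 [delta2_gt0 inG]] := open_in_Rn_ray d G_open Gx.
have [s_gt0 [s_lt1 s_lt2]] := half_Rmin_bounds delta1_gt0 delta2_gt0.
exists (Rmin delta1 delta2 / 2); split; first exact: s_gt0.
by split; [apply: inG | apply: below]; lra.
Qed.

Theorem lemma3 (n : nat) (Gam S : vec n -> Prop) (f : vec n -> R)
  (grad : vec n -> vec n)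
  (hGopen : open_in_Rn Gam) (hGconv : convex_in_Rn Gam)
  (hSsub : forall z, S z -> Gam z) (hSne : exists z, S z) (hSconv : convex_in_Rn S)
  (hdiff : forall z, Gam z -> frechet_grad f z (grad z))
  (hqc : quasiconvex_on Gam f)
  (x y : vec n) (hx : argmin_on f S x) (hy : argmin_on f S y)
  (hgx : grad x <> vzero) (hgy : grad y <> vzero) :
  forall d : vec n, (dot (grad x) d < 0) -> (dot (grad y) d <= 0).
Proof.
move=> d gxd_lt0; case: hx => Sx x_min; case: hy => Sy y_min.
have [Gx Gy] := (hSsub x Sx, hSsub y Sy).
have fxy : f x = f y by have := x_min y Sy; have := y_min x Sx; lra.
have gy_xy : 0 <= dot (grad y) (vsub x y).
  apply: (frechet_grad_dir_ge0 (hdiff y Gy)) => s s_in.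
  by apply: y_min; apply: hSconv => //; lra.
have [s [s_gt0 [Gz fz_lt]]] := descent_step_in_open hGopen Gx (hdiff x Gx) gxd_lt0.
set z := vadd x (vscale s d) in Gz fz_lt.
have gy_zy : dot (grad y) (vsub z y) <= 0.
  apply: (frechet_grad_dir_le0 (hdiff y Gy)) => t t_in.
  by rewrite -(Rmax_left (f y) (f z)); [apply: hqc => //; lra | lra].
have zy : vsub z y = vadd (vsub x y) (vscale s d).
  by apply: functional_extensionality => i; rewrite /z /vsub /vadd; ring.
by move: gy_zy; rewrite zy dot_addr dot_scaler; nra.
Qed.
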